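(* Let $\Omega\subset\mathbb{R}^N$ be a bounded open connected set and let $w\in\mathrm{USC}(\overline{\Omega})$ be $\tilde{\mathcal{Q}}$-subharmonic in $\Omega$. If $w\le 0$ on $\partial\Omega$, then $w\le 0$ on $\Omega$.
   Context: $\mathcal{S}(N)$ is the space of real symmetric $N\times N$ matrices, $\lambda_N(A)$ the largest eigenvalue of $A$. $\tilde{\mathcal{Q}}:=\{(r,A)\in\mathbb{R}\times\mathcal{S}(N): r\le 0\text{ or }\lambda_N(A)\ge 0\}$. For $w$ defined near $x_0$, $J^+_{x_0}w:=\{(\varphi(x_0),D^2\varphi(x_0)):\varphi$ is $C^2$ near $x_0$, $w\le\varphi$ near $x_0$, $w(x_0)=\varphi(x_0)\}$. A function $w\in\mathrm{USC}(\Omega)$ (upper semicontinuous with values in $[-\infty,\infty)$) is $\tilde{\mathcal{Q}}$-subharmonic in $\Omega$ if $J^+_{x_0}w\subset\tilde{\mathcal{Q}}$ for every $x_0\in\Omega$. *)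

From HB Require Import structures.
From mathcomp Require Import all_boot all_order all_algebra.
From mathcomp Require Import all_classical all_reals all_analysis.
Set Implicit Arguments. Unset Strict Implicit. Unset Printing Implicit Defensive.
Import Order.TTheory GRing.Theory Num.Theory.
Import numFieldNormedType.Exports.
Local Open Scope classical_set_scope.
Local Open Scope ring_scope.

Section Defs.
Variables (R : realType) (N : nat).
Local Notation V := 'rV[R]_N.

Definition unitv (i : 'I_N) : V := delta_mx 0 i.

Definition partial (i : 'I_N) (f : V -> R) : V -> R :=
  fun x => 'D_(unitv i) f x.

Definition hessian (f : V -> R) (x : V) : 'M[R]_N :=
  \matrix_(i, j) partial i (partial j f) x.

Definition C2_near (f : V -> R) (x0 : V) : Prop :=
  exists2 e : R, 0 < e & forall y, ball x0 e y ->
    [/\ differentiable f y,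
        (forall i, differentiable (partial i f) y) &
        (forall i j, {for y, continuous (partial i (partial j f))})].

Definition lambda_max (A : 'M[R]_N) : R := sup [set a : R | eigenvalue A a].

Definition Qtilde : set (R * 'M[R]_N) :=
  [set rA | rA.2^T = rA.2 /\ (rA.1 <= 0 \/ 0 <= lambda_max rA.2)].

Definition superjet (w : V -> \bar R) (x0 : V) : set (R * 'M[R]_N) :=
  [set rA | exists phi : V -> R,
     [/\ C2_near phi x0,
         (\forall y \near x0, (w y <= (phi y)%:E)%E),
         w x0 = (phi x0)%:E,
         rA.1 = phi x0 & rA.2 = hessian phi x0]].

Definition Qtilde_subharmonic (w : V -> \bar R) (Omega : set V) : Prop :=
  forall x0, Omega x0 -> superjet w x0 `<=` Qtilde.

Definition usc_on (w : V -> \bar R) (D : set V) : Prop :=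
  forall x, D x -> (w x < +oo)%E /\
    (forall t : R, (w x < t%:E)%E ->
      \forall y \near x, D y -> (w y < t%:E)%E).

End Defs.

From mathcomp Require Import all_boot all_order all_algebra.
From mathcomp Require Import all_classical all_reals all_analysis.
From mathcomp Require Import lra.
Set Implicit Arguments. Unset Strict Implicit. Unset Printing Implicit Defensive.
Import Order.TTheory GRing.Theory Num.Theory.
Import numFieldNormedType.Exports.
Local Open Scope classical_set_scope.
Local Open Scope ring_scope.

(* If w(x0) = a > 0, choose eps > 0 so small that eps |x|^2 < a on the closure
   of Omega.  The upper semicontinuous function w + eps |x|^2 attains its
   maximum over this compact set at some y with w(y) > 0, so y is not on the
   boundary.  A paraboloid c - eps |x|^2 then touches w from above at y, so
   (w(y), -2 eps I) lies in the superjet of w at y, although w(y) > 0 and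
   lambda_N(-2 eps I) < 0. *)

Section Paraboloid.
Variables (R : realType) (N : nat).
Local Notation V := 'rV[R]_N.

Lemma unitvE (i j : 'I_N) : unitv R i ord0 j = (i == j)%:R.
Proof. by rewrite /unitv mxE eqxx /= eq_sym. Qed.

Lemma is_derive_coord (k : 'I_N) (x v : V) :
  is_derive x v (fun y : V => y ord0 k) (v ord0 k).
Proof.
have @f : {linear V -> R}.
  by exists (fun y : V => y ord0 k); do 2![eexists]; do ?[constructor];
     rewrite ?mxE// => ? *; rewrite ?mxE//; move=> ?; rewrite !mxE.
have -> : (fun y : V => y ord0 k) = f by [].
have f_diff : differentiable f x.
  exact/linear_differentiable/coord_continuous.
apply: DeriveDef; first exact/diff_derivable.
by rewrite deriveE // diff_lin //; exact: coord_continuous.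
Qed.

Definition sqnorm (y : V) : R := \sum_(k < N) y ord0 k ^+ 2.

Lemma sqnormE : sqnorm = \sum_(k < N) (fun y : V => y ord0 k) ^+ 2.
Proof.
by apply/funext => y; rewrite fct_sumE; apply: eq_bigr => k _; rewrite fctE.
Qed.

Lemma sqnorm_ge0 (y : V) : 0 <= sqnorm y.
Proof. by apply: sumr_ge0 => k _; exact: sqr_ge0. Qed.

Lemma differentiable_sqnorm (y : V) : differentiable sqnorm y.
Proof.
by rewrite sqnormE; apply: differentiable_sum => k; apply: differentiableX;
  exact: differentiable_coord.
Qed.

Lemma continuous_sqnorm : continuous sqnorm.
Proof. by move=> y; exact/differentiable_continuous/differentiable_sqnorm. Qed.

Lemma small_sqnorm_multiple (K : set V) (a : R) :
  compact K -> K !=set0 -> 0 < a ->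
  exists2 eps, 0 < eps & forall z, K z -> eps * sqnorm z < a.
Proof.
move=> K_cpt K_ne a_gt0.
have [m _ sqnorm_le] :=
  EVT_max_rV K_ne K_cpt (continuous_subspaceT continuous_sqnorm).
have den_gt0 : 0 < 2 * (sqnorm m + 1).
  by rewrite mulr_gt0 ?ltr_wpDl ?sqnorm_ge0.
exists (a / (2 * (sqnorm m + 1))) => [|z Kz]; first by rewrite divr_gt0.
have := sqnorm_le z (mem_set Kz); have := sqnorm_ge0 m.
have : a / (2 * (sqnorm m + 1)) * (2 * (sqnorm m + 1)) = a by rewrite divfK ?gt_eqF.
set eps := _ / _; nra.
Qed.

Lemma is_derive_sqnorm (j : 'I_N) (x : V) :
  is_derive x (unitv R j) sqnorm (2 * x ord0 j).
Proof.
rewrite sqnormE; apply: is_derive_eq.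
  by apply: is_derive_sum => k; exact: (is_deriveX 2 (is_derive_coord k _ _)).
rewrite (bigD1 j) //= big1 ?addr0 => [|k kj].
  by rewrite unitvE eqxx expr1 scaler1.
by rewrite unitvE eq_sym (negbTE kj) scaler0.
Qed.

Definition paraboloid (c eps : R) (y : V) : R := c - eps * sqnorm y.

Lemma paraboloidE c eps : paraboloid c eps = cst c - eps *: sqnorm.
Proof. by apply/funext => y; rewrite /paraboloid /= fctE. Qed.

Lemma partial_paraboloid c eps (j : 'I_N) :
  partial j (paraboloid c eps) = (- (2 * eps)) *: (fun y : V => y ord0 j).
Proof.
apply/funext => x; rewrite /partial paraboloidE.
rewrite (derive_val (is_derive := is_deriveB (is_derive_cst c _ _)
                                 (is_deriveZ eps (is_derive_sqnorm j x)))).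
by rewrite !fctE sub0r /GRing.scale /=; lra.
Qed.

Lemma partial2_paraboloid c eps (i j : 'I_N) :
  partial i (partial j (paraboloid c eps)) = cst (- (2 * eps) * (i == j)%:R).
Proof.
apply/funext => x; rewrite partial_paraboloid /partial.
rewrite (derive_val (is_derive := is_deriveZ _ (is_derive_coord j x _))).
by rewrite unitvE.
Qed.

Lemma hessian_paraboloid c eps (x : V) :
  hessian (paraboloid c eps) x = (- (2 * eps))%:M.
Proof.
by apply/matrixP => i j; rewrite /hessian !mxE partial2_paraboloid mulr_natr.
Qed.

Lemma C2_near_paraboloid c eps (x0 : V) : C2_near (paraboloid c eps) x0.
Proof.
exists 1 => // y _; split=> [|i|i j].
- rewrite paraboloidE; apply: differentiableB; first exact: differentiable_cst.
  exact/differentiableZ/differentiable_sqnorm.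
- rewrite partial_paraboloid; exact/differentiableZ/differentiable_coord.
- rewrite partial2_paraboloid; exact: cst_continuous.
Qed.

Lemma superjet_paraboloid (w : V -> \bar R) (x0 : V) (c eps : R) :
  (\forall y \near x0, (w y <= (paraboloid c eps y)%:E)%E) ->
  w x0 = (paraboloid c eps x0)%:E ->
  superjet w x0 (paraboloid c eps x0, (- (2 * eps))%:M).
Proof.
move=> w_le w_x0; exists (paraboloid c eps); split=> //.
  exact: C2_near_paraboloid.
by rewrite hessian_paraboloid.
Qed.

Lemma superjet_at_perturbed_max (w : V -> \bar R) (U : set V) (y : V)
    (r eps : R) :
  open U -> U y -> w y = r%:E ->
  (forall z, U z -> (w z + (eps * sqnorm z)%:E <= (r + eps * sqnorm y)%:E)%E) ->
  superjet w y (r, (- (2 * eps))%:M).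
Proof.
move=> U_open Uy w_y w_le.
have c_y : paraboloid (r + eps * sqnorm y) eps y = r by rewrite /paraboloid addrK.
rewrite -{1}c_y; apply: superjet_paraboloid; last by rewrite c_y.
apply: filterS (U_open y Uy) => z Uz.
by rewrite /paraboloid EFinB leeBrDr // w_le.
Qed.

End Paraboloid.

Section ScalarMatrix.
Variables (R : realType) (N : nat).
Hypothesis N_gt0 : (0 < N)%N.

Lemma eigenvalue_scalar_mx (c a : R) : eigenvalue (c%:M : 'M[R]_N) a = (a == c).
Proof.
apply/eigenvalueP/eqP => [[v] | ->].
  rewrite mul_mx_scalar => /eqP.
  rewrite -subr_eq0 -scalerBl scaler_eq0 subr_eq0.
  by case/orP => [/eqP //| /[swap] /negbTE ->].
exists (unitv R (Ordinal N_gt0)); first by rewrite mul_mx_scalar.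
apply/eqP => /matrixP /(_ ord0 (Ordinal N_gt0)) /eqP.
by rewrite unitvE eqxx mxE oner_eq0.
Qed.

Lemma lambda_max_scalar_mx (c : R) : lambda_max (c%:M : 'M[R]_N) = c.
Proof.
rewrite /lambda_max (_ : [set a | _] = [set c]) ?sup1 //.
by apply/seteqP; split => a /=; rewrite eigenvalue_scalar_mx => /eqP.
Qed.

Lemma Qtilde_scalar_mx (r c : R) :
  Qtilde (r, c%:M : 'M[R]_N) <-> r <= 0 \/ 0 <= c.
Proof.
rewrite /Qtilde /= lambda_max_scalar_mx.
by split=> [[] | ] //; split=> //; exact: tr_scalar_mx.
Qed.

End ScalarMatrix.

Section UpperSemicontinuous.
Variables (R : realType) (N : nat).
Local Notation V := 'rV[R]_N.
Local Open Scope ereal_scope.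

Lemma usc_onD_continuous (w : V -> \bar R) (g : V -> R) (D : set V) :
  usc_on w D -> continuous g -> usc_on (fun y => w y + (g y)%:E) D.
Proof.
move=> w_usc g_cont x Dx; have [wx_ltoo w_usc_x] := w_usc x Dx.
split; first by rewrite lte_add_pinfty ?ltry.
move=> t wgx_lt_t.
have [s wx_lt_s s_lt] : exists2 s : R, w x < s%:E & (s < t - g x)%R.
  move: wx_ltoo wgx_lt_t; case: (w x) => [r _| |] //.
    rewrite -EFinD lte_fin => ?.
    by exists ((r + (t - g x)) / 2)%R; rewrite ?lte_fin; lra.
  by move=> _ _; exists (t - g x - 1)%R; [exact: ltNyr | lra].
have g_near : \forall y \near x, (g y < g x + (t - g x - s))%R.
  by apply: (cvgr_lt _ (g_cont x)); rewrite ltrDl subr_gt0.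
apply: filterS2 (w_usc_x s wx_lt_s) g_near => y w_lt g_lt Dy.
move: (w_lt Dy); case: (w y) => [r| |] //; last by rewrite addNye !ltNyr.
by rewrite -EFinD !lte_fin => ?; lra.
Qed.

Lemma usc_compact_max (f : V -> \bar R) (K : set V) :
  compact K -> K !=set0 -> usc_on f K ->
  exists2 y, K y & forall z, K z -> f z <= f y.
Proof.
move=> K_cpt [x0 Kx0] f_usc.
pose T t := exists2 y, K y & t%:E <= f y.
pose C t := [set y | K y /\ t%:E <= f y].
have [[a Ta] | noT] := pselect (exists a, T a); last first.
  exists x0 => // z Kz; suff -> : f z = -oo by rewrite leNye.
  have [fz_ltoo _] := f_usc z Kz; move: fz_ltoo; case E : (f z) => [r| |] //.
  by move=> _; exfalso; apply: noT; exists r, z; rewrite ?E.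
have F_proper : ProperFilter (filter_from T C).
  apply: filter_from_proper => [|t [y Ky fy]]; last by exists y.
  apply: filter_from_filter; first by exists a.
  move=> s t Ts Tt; exists (Order.max s t); first by case: leP.
  move=> y [Ky fy]; split; split=> //; apply: le_trans fy;
    by rewrite lee_fin le_max lexx ?orbT.
(* A cluster point of the superlevel sets [C t] is a maximiser. *)
have [y [Ky y_cluster]] : exists y, K y /\ cluster (filter_from T C) y.
  by apply: K_cpt; exists a => // ? [].
have le_fy t : T t -> t%:E <= f y.
  move=> Tt; rewrite leNgt; apply/negP => fy_lt.
  have FCt : filter_from T C (C t) by exists t.
  have [z [[Kz tz] fz_lt]] := y_cluster _ _ FCt ((f_usc y Ky).2 t fy_lt).
  by move: (fz_lt Kz); rewrite ltNge tz.
exists y => // z Kz; have [fz_ltoo _] := f_usc z Kz.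
move: fz_ltoo; case E : (f z) => [r| |] // _; last by rewrite leNye.
by apply: le_fy; exists z; rewrite ?E.
Qed.

End UpperSemicontinuous.

Lemma bounded_closure_compact (R : realType) (N : nat) (A : set 'rV[R]_N) :
  bounded_set A -> compact (closure A).
Proof.
move=> A_bd; apply: bounded_closed_compact; last exact: closed_closure.
move: A_bd; rewrite /= /bounded_near; apply: filterS => M A_M y Ay.
suff : closed_ball_ Num.norm 0 M y by rewrite /closed_ball_ /= distrC subr0.
apply: closed_closed_ball_; apply: closureS Ay => z /A_M.
by rewrite /closed_ball_ /= distrC subr0.
Qed.

Theorem theorem4p1 (R : realType) (N : nat) (Omega : set 'rV[R]_N)
  (w : 'rV[R]_N -> \bar R) :
  (0 < N)%N ->
  bounded_set Omega -> open Omega -> connected Omega ->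
  usc_on w (closure Omega) ->
  Qtilde_subharmonic w Omega ->
  (forall x, (closure Omega `\` Omega) x -> (w x <= 0)%E) ->
  forall x, Omega x -> (w x <= 0)%E.
Proof.
move=> N_gt0 O_bd O_open _ w_usc w_sub w_bdry x0 Ox0.
rewrite leNgt; apply/negP => w_x0_gt0.
set K := closure Omega; have OK : Omega `<=` K := @subset_closure _ Omega.
have K_cpt : compact K := bounded_closure_compact O_bd.
have K_ne : K !=set0 by exists x0; exact: OK.
have [a w_x0 a_gt0] : exists2 a : R, w x0 = a%:E & 0 < a.
  move: w_x0_gt0 (w_usc x0 (OK _ Ox0)).1.
  by case: (w x0) => [a| |] // a_gt0 _; exists a; rewrite -?lte_fin.
have [eps eps_gt0 eps_sqnorm_lt] := small_sqnorm_multiple K_cpt K_ne a_gt0.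
have g_cont : continuous (cst eps \* @sqnorm R N).
  move=> z; apply: continuousM; first exact: cst_continuous.
  exact: continuous_sqnorm.
have [y Ky /= f_max] :=
  usc_compact_max K_cpt K_ne (usc_onD_continuous w_usc g_cont).
have [r w_y r_gt0] : exists2 r : R, w y = r%:E & 0 < r.
  have := f_max x0 (OK _ Ox0); rewrite w_x0.
  case: (w y) (w_usc y Ky).1 => [r _| // | _]; last first.
    by rewrite addNye leeNy_eq -EFinD.
  rewrite -!EFinD lee_fin => ?; exists r => //.
  have := eps_sqnorm_lt y Ky; have := sqnorm_ge0 x0; nra.
have Oy : Omega y.
  apply: contrapT => Oy; have := w_bdry y (conj Ky Oy).
  by rewrite w_y lee_fin; lra.
have w_le z : Omega z ->
    (w z + (eps * sqnorm z)%:E <= (r + eps * sqnorm y)%:E)%E.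
  by move=> Oz; rewrite EFinD -w_y; exact: f_max (OK _ Oz).
have := w_sub y Oy _ (superjet_at_perturbed_max O_open Oy w_y w_le).
by rewrite Qtilde_scalar_mx //; lra.
Qed.
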